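(* Let $A\in\mathbb R^{n\times n}$, $B\in\mathbb R^{n\times m}$, $K\in\mathbb R^{m\times n}$ be as in the context, and let $$\gamma^*_{L0}\;=\;\max_{\alpha\in\mathcal A_0}\ \inf_{P\in\mathbb S^n,\,P\succeq 0}\ \lambda_{\max}\big(A(\alpha)^TP+PA(\alpha)\big)\ \in [-\infty,\infty).$$ Then $K$ is resilient if and only if $\gamma^*_{L0}=-\infty$, and $K$ is not resilient if and only if $\gamma^*_{L0}\ge 0$.
   Context: Fix integers $N\ge 1$ and $n_1,\dots,n_N\ge 1$, $m_1,\dots,m_N\ge 0$, with $n=\sum_i n_i$, $m=\sum_i m_i$. Let $A=[A_{ij}]_{1\le i,j\le N}\in\mathbb R^{n\times n}$ with blocks $A_{ij}\in\mathbb R^{n_i\times n_j}$, $B=\mathrm{diag}(B_1,\dots,B_N)\in\mathbb R^{n\times m}$ with $B_i\in\mathbb R^{n_i\times m_i}$, and $K=[K_{ij}]_{1\le i,j\le N}\in\mathbb R^{m\times n}$ with blocks $K_{ij}\in\mathbb R^{m_i\times n_j}$. For a matrix $\alpha\in\mathbb R^{N\times N}$, write $K\circ\alpha=[\alpha_{ij}K_{ij}]_{1\le i,j\le N}$ (each block scaled by the corresponding scalar entry) and $A(\alpha)=A+B\,(K\circ\alpha)$. The pure attack space is $\mathcal A_0=\{\alpha\in\{0,1\}^{N\times N}:\alpha_{ii}=1 \text{ for all } i\}$. A square matrix is called stable if all its eigenvalues have strictly negative real part. The controller $K$ is called resilient if $A(\alpha)$ is stable for every $\alpha\in\mathcal A_0$,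 and not resilient otherwise (i.e. if $A(\alpha)$ is not stable for some $\alpha\in\mathcal A_0$). $\mathbb S^n$ denotes real symmetric $n\times n$ matrices, $\succeq$ the positive semidefinite order, and $\lambda_{\max}$ the largest eigenvalue of a symmetric matrix. *)

From HB Require Import structures.
From mathcomp Require Import all_boot all_order all_algebra.
Set Implicit Arguments. Unset Strict Implicit. Unset Printing Implicit Defensive.
Import Order.TTheory GRing.Theory Num.Theory.
Local Open Scope ring_scope.

(* A complex number a + i b (a b : R) is an eigenvalue of the real square
   matrix M iff the complexified matrix has an eigenvector x + i y, i.e.
   M x = a x - b y and M y = b x + a y with (x, y) <> (0, 0). *)
Definition cplx_eigenvalue (R : rcfType) (d : nat) (M : 'M[R]_d) (a b : R) :=
  exists (x y : 'cV[R]_d), (x != 0 \/ y != 0) /\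
    M *m x = a *: x - b *: y /\ M *m y = b *: x + a *: y.

Definition stable (R : rcfType) (d : nat) (M : 'M[R]_d) :=
  forall a b : R, cplx_eigenvalue M a b -> a < 0.

Definition psd (R : rcfType) (d : nat) (P : 'M[R]_d) :=
  P^T = P /\ forall x : 'cV[R]_d, 0 <= (x^T *m P *m x) 0 0.

(* lambda_max(S) < c  (S symmetric, so all its eigenvalues are real) *)
Definition lambda_max_lt (R : rcfType) (d : nat) (S : 'M[R]_d) (c : R) :=
  forall a, eigenvalue S a -> a < c.
Definition lambda_max_ge (R : rcfType) (d : nat) (S : 'M[R]_d) (c : R) :=
  exists2 a, eigenvalue S a & c <= a.

Definition pure_attack (N : nat) (alpha : 'I_N -> 'I_N -> bool) :=
  forall i, alpha i i = true.

Definition Aalpha (R : rcfType) (N : nat) (nb mb : 'I_N -> nat)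
  (Ab : forall i j, 'M[R]_(nb i, nb j))
  (Bb : forall i j, 'M[R]_(nb i, mb j))
  (Kb : forall i j, 'M[R]_(mb i, nb j))
  (alpha : 'I_N -> 'I_N -> bool) : 'M[R]_(\sum_i nb i) :=
  mxblock Ab + mxblock Bb *m mxblock (fun i j => (alpha i j)%:R *: Kb i j).

Definition resilient (R : rcfType) (N : nat) (nb mb : 'I_N -> nat)
  (Ab : forall i j, 'M[R]_(nb i, nb j))
  (Bb : forall i j, 'M[R]_(nb i, mb j))
  (Kb : forall i j, 'M[R]_(mb i, nb j)) :=
  forall alpha, pure_attack alpha -> stable (Aalpha Ab Bb Kb alpha).

(* gamma*_{L0} = -oo :  for every alpha in A_0 the infimum over P is -oo *)
Definition gammaL0_neg_infty (R : rcfType) (N : nat) (nb mb : 'I_N -> nat)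
  (Ab : forall i j, 'M[R]_(nb i, nb j))
  (Bb : forall i j, 'M[R]_(nb i, mb j))
  (Kb : forall i j, 'M[R]_(mb i, nb j)) :=
  forall alpha, pure_attack alpha ->
    forall c : R, exists P : 'M[R]_(\sum_i nb i), psd P /\
      lambda_max_lt ((Aalpha Ab Bb Kb alpha)^T *m P + P *m Aalpha Ab Bb Kb alpha) c.

(* gamma*_{L0} >= 0 :  some alpha in A_0 has infimum over P at least 0 *)
Definition gammaL0_nonneg (R : rcfType) (N : nat) (nb mb : 'I_N -> nat)
  (Ab : forall i j, 'M[R]_(nb i, nb j))
  (Bb : forall i j, 'M[R]_(nb i, mb j))
  (Kb : forall i j, 'M[R]_(mb i, nb j)) :=
  exists alpha, pure_attack alpha /\
    forall P : 'M[R]_(\sum_i nb i), psd P ->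
      lambda_max_ge ((Aalpha Ab Bb Kb alpha)^T *m P + P *m Aalpha Ab Bb Kb alpha) 0.

From HB Require Import structures.
From mathcomp Require Import all_boot all_order all_algebra.
From mathcomp Require Import complex polyrcf ring lra.
From Stdlib Require Import Classical.
Set Implicit Arguments. Unset Strict Implicit. Unset Printing Implicit Defensive.
Import Order.TTheory GRing.Theory Num.Theory.
Local Open Scope ring_scope.
Local Open Scope sesquilinear_scope.

(* For a single real matrix [M] (one attack [alpha], [M = A(alpha)]) the two
   sides are tied together by the Lyapunov matrix [M^T P + P M].  If its
   largest eigenvalue is negative for some [P >= 0], then for a complex
   eigenvector [x + iy] with eigenvalue [a + ib] the quadratic form gives
   [2 a (x^T P x + y^T P y) < 0], so [a < 0].  Conversely, if [M] is Hurwitz,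
   Schur triangularisation [U M U^-1 = T] followed by the diagonal scaling
   [D = diag (r^i)] with [r] small yields [D T D^-1] with the diagonal of [T]
   and arbitrarily small off-diagonal entries, hence with negative definite
   Hermitian part; [P = Re ((DU)^* (DU))] is then a Lyapunov matrix, and
   scaling [P] drives the largest eigenvalue of [M^T P + P M] to [-oo]. *)

Lemma char_poly_trmx (F : fieldType) n (A : 'M[F]_n) : char_poly A^T = char_poly A.
Proof.
rewrite /char_poly -det_tr /char_poly_mx linearB /= tr_scalar_mx.
by rewrite -map_trmx trmxK.
Qed.

Lemma eigenvalue_col (F : fieldType) n (A : 'M[F]_n) a : eigenvalue A a ->
  exists2 v : 'cV_n, v != 0 & A *m v = a *: v.
Proof.
rewrite eigenvalue_root_char -char_poly_trmx -eigenvalue_root_char.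
move=> /eigenvalueP [v vA v_nz]; exists v^T; first by rewrite trmx_eq0.
by rewrite -[A]trmxK -trmx_mul vA linearZ.
Qed.

Lemma eigenvalue_trig (F : fieldType) n (T : 'M[F]_n) i : is_trig_mx T -> eigenvalue T (T i i).
Proof.
move=> T_trig; rewrite eigenvalue_root_char char_poly_trig //; apply/rootP.
by rewrite horner_prod (bigD1 i) //= hornerXsubC subrr mul0r.
Qed.

Lemma ler_sum_term (R : numDomainType) (I : finType) (F : I -> R) i :
  (forall j, 0 <= F j) -> F i <= \sum_j F j.
Proof. by move=> F_ge0; rewrite (bigD1 i) //= lerDl sumr_ge0. Qed.

Section RealForms.
Variable R : rcfType.
Implicit Types (d : nat) (c t : R).

Definition bform d (P : 'M[R]_d) (u v : 'cV[R]_d) := (u^T *m P *m v) 0 0.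
Definition negdef d (Q : 'M[R]_d) := forall x, x != 0 -> bform Q x x < 0.
Definition lyapmx d (M P : 'M[R]_d) := M^T *m P + P *m M.

Lemma bform_sym d (P : 'M[R]_d) u v : P^T = P -> bform P u v = bform P v u.
Proof.
move=> Psym; have tr11 (A : 'M[R]_1) : A 0 0 = A^T 0 0 by rewrite mxE.
by rewrite /bform [LHS]tr11 !trmx_mul trmxK Psym mulmxA.
Qed.

Lemma bform_lyapmx d (M P : 'M[R]_d) x : P^T = P ->
  bform (lyapmx M P) x x = 2 * bform P x (M *m x).
Proof.
move=> Psym; have -> : bform (lyapmx M P) x x = bform P (M *m x) x + bform P x (M *m x).
  by rewrite /bform /lyapmx mulmxDr mulmxDl trmx_mul !mulmxA mxE.
by rewrite bform_sym //; ring.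
Qed.

Lemma lyapmx_sym d (M P : 'M[R]_d) : P^T = P -> (lyapmx M P)^T = lyapmx M P.
Proof. by move=> Psym; rewrite linearD /= !trmx_mul trmxK Psym addrC. Qed.

Lemma negdef_le0 d (Q : 'M[R]_d) x : negdef Q -> bform Q x x <= 0.
Proof.
move=> Qneg; have [->|/Qneg/ltW //] := eqVneq x 0.
by rewrite /bform mulmx0 mxE.
Qed.

(* For an eigenvector [x + iy] of [M] with eigenvalue [a + ib], the Lyapunov
   form gives [2 a (x^T P x + y^T P y)], the [b]-terms cancelling by symmetry. *)
Lemma negdef_lyapmx_stable d (M P : 'M[R]_d) :
  psd P -> negdef (lyapmx M P) -> stable M.
Proof.
move=> [Psym Ppos] Qneg a b [x [y [nz_xy [Mx My]]]].
have key : bform (lyapmx M P) x x + bform (lyapmx M P) y y =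
           2 * a * (bform P x x + bform P y y).
  have bformZ u v w k l : bform P u (k *: v + l *: w) = k * bform P u v + l * bform P u w.
    by rewrite /bform mulmxDr -!scalemxAr [LHS]mxE [_ 0 0]mxE [X in _ + X]mxE.
  rewrite !bform_lyapmx // Mx My -scaleNr !bformZ (bform_sym x y Psym); ring.
have : bform (lyapmx M P) x x + bform (lyapmx M P) y y < 0.
  by case: nz_xy => /Qneg; [apply: ltr_wnDr | apply: ltr_wnDl]; exact: negdef_le0.
rewrite key; apply: contraTlt => a_ge0.
by rewrite -leNgt mulr_ge0 ?mulr_ge0 ?addr_ge0 ?Ppos.
Qed.

Lemma mulmx_trmx_gt0 d (v : 'rV[R]_d) : v != 0 -> 0 < (v *m v^T) 0 0.
Proof.
move=> v_nz; rewrite mxE; have sq_ge0 j : 0 <= v 0 j * v^T j 0.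
  by rewrite mxE -expr2 sqr_ge0.
rewrite lt_def sumr_ge0 ?andbT; last by move=> j _.
apply: contra v_nz => /eqP/psumr_eq0P v0; apply/eqP/rowP => j.
by have /eqP := v0 (fun i _ => sq_ge0 i) j isT; rewrite mxE -expr2 sqrf_eq0 mxE => /eqP.
Qed.

Lemma negdef_lambda_max_lt0 d (Q : 'M[R]_d) : negdef Q -> lambda_max_lt Q 0.
Proof.
move=> Qneg a /eigenvalueP [v vQ v_nz]; have := Qneg v^T; rewrite trmx_eq0 v_nz.
by rewrite /bform trmxK vQ -scalemxAl mxE => /(_ isT); rewrite pmulr_llt0 ?mulmx_trmx_gt0.
Qed.

Lemma lt0_seq_ub (s : seq R) : {in s, forall r, r < 0} ->
  exists2 m, m < 0 & {in s, forall r, r <= m}.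
Proof.
elim: s => [|r s IHs] s_lt0; first by exists (-1); rewrite ?oppr_lt0.
have [|m m_lt0 s_le_m] := IHs; first by move=> x xs; apply: s_lt0; rewrite inE xs orbT.
exists (Num.max r m); first by rewrite gt_max m_lt0 s_lt0 ?mem_head.
by move=> x; rewrite inE => /predU1P [->|/s_le_m x_le_m]; rewrite le_max ?lexx ?x_le_m ?orbT.
Qed.

Lemma lambda_max_lt0_ub d (Q : 'M[R]_d) : lambda_max_lt Q 0 ->
  exists2 m, m < 0 & forall a, eigenvalue Q a -> a <= m.
Proof.
move=> Q_lt0; have chi_nz : char_poly Q != 0 by rewrite monic_neq0 ?char_poly_monic.
have [|m m_lt0 roots_le_m] := @lt0_seq_ub (rootsR (char_poly Q)).
  move=> r; rewrite -(roots_on_rootsR chi_nz) => /andP [_].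
  by rewrite -eigenvalue_root_char => /Q_lt0.
exists m => // a; rewrite eigenvalue_root_char => Qa; apply: roots_le_m.
by rewrite -(roots_on_rootsR chi_nz) Qa andbT in_itv.
Qed.

Lemma eigenvalueZ d (Q : 'M[R]_d) t a : t != 0 ->
  eigenvalue (t *: Q) (t * a) = eigenvalue Q a.
Proof.
move=> t_nz; apply/eigenvalueP/eigenvalueP => [] [v vQ v_nz]; exists v => //.
  by apply: (scalerI t_nz); rewrite scalerA -vQ scalemxAr.
by rewrite -scalemxAr vQ scalerA.
Qed.

Lemma psdZ d (P : 'M[R]_d) t : 0 <= t -> psd P -> psd (t *: P).
Proof.
move=> t_ge0 [Psym Ppos]; split; first by rewrite linearZ /= Psym.
by move=> x; rewrite -scalemxAr -scalemxAl mxE mulr_ge0.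
Qed.

Lemma lyapmxZ d (M P : 'M[R]_d) t : lyapmx M (t *: P) = t *: lyapmx M P.
Proof. by rewrite /lyapmx -scalemxAr -scalemxAl scalerDr. Qed.

(* Scaling [P] scales the spectrum of [lyapmx M P], which is negative. *)
Lemma negdef_lyapmx_lambda_max_unbounded d (M P : 'M[R]_d) : psd P -> negdef (lyapmx M P) ->
  forall c, exists P', psd P' /\ lambda_max_lt (lyapmx M P') c.
Proof.
move=> Ppsd Qneg c; have [m m_lt0 eig_le_m] := lambda_max_lt0_ub (negdef_lambda_max_lt0 Qneg).
pose t := (`|c| + 1) / - m.
have t_gt0 : 0 < t by rewrite divr_gt0 ?oppr_gt0 // ltr_pwDr.
exists (t *: P); split; first exact/psdZ/Ppsd/ltW.
have t_nz : t != 0 by rewrite lt0r_neq0.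
move=> a; rewrite lyapmxZ -(divfK t_nz a) mulrC eigenvalueZ // => /eig_le_m a_le_m.
apply: le_lt_trans (ler_wpM2l (ltW t_gt0) a_le_m) _.
have -> : t * m = - (`|c| + 1) by rewrite /t; field; rewrite ?oppr_eq0 ltr0_neq0.
have : - `|c| <= c by rewrite lerNl -normrN ler_norm.
lra.
Qed.
End RealForms.

Section ComplexMatrices.
Variable C : numClosedFieldType.

Lemma sqnorm_gt0 n (z : 'cV[C]_n) : z != 0 -> 0 < \sum_j `|z j 0| ^+ 2.
Proof.
move=> z_nz; have [j zj_nz] : exists j, z j 0 != 0.
  apply/existsP; apply: contraNT z_nz; rewrite negb_exists => /forallP z0.
  by apply/eqP/colP => j; rewrite mxE; apply/eqP; rewrite -[_ == _]negbK z0.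
rewrite (bigD1 j) //= ltr_wpDr ?sumr_ge0 // => [k _|]; first exact: exprn_ge0.
by rewrite exprn_gt0 ?normr_gt0.
Qed.

Lemma form_diag_mx n (s : 'rV[C]_n) (z : 'cV[C]_n) :
  (z^t* *m diag_mx s *m z) 0 0 = \sum_j s 0 j * `|z j 0| ^+ 2.
Proof.
rewrite mxE; apply: eq_bigr => j _.
by rewrite mul_mx_diag !mxE normCKC mulrAC mulrC.
Qed.

Lemma spectral_diag_eigenvalue n (A : 'M[C]_n) i :
  A \is normalmx -> eigenvalue A (spectral_diag A 0 i).
Proof.
move=> /orthomx_spectralP A_spectral; set U := spectralmx A in A_spectral.
have U_unitary : U \is unitarymx := spectral_unitarymx A.
have UA : U *m A = diag_mx (spectral_diag A) *m U.
  by rewrite {1}A_spectral !mulmxA mulmxV ?unitarymx_unit ?mul1mx.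
apply/eigenvalueP; exists (row i U).
  by rewrite -row_mul UA row_mul row_diag_mx -scalemxAl -rowE.
apply/eqP => Ui0; move/row_unitarymxP/(_ i i): U_unitary.
by rewrite Ui0 dotmxE mul0mx mxE eqxx => /eqP; rewrite eq_sym oner_eq0.
Qed.

Lemma Re_conjCM_le (x k y e : C) : `|k| <= e ->
  'Re (x^* * k * y) <= e / 2 * (`|x| ^+ 2 + `|y| ^+ 2).
Proof.
move=> k_le_e; have e_ge0 : 0 <= e := le_trans (normr_ge0 k) k_le_e.
have amgm : `|x| * `|y| *+ 2 <= `|x| ^+ 2 + `|y| ^+ 2.
  have := exprn_ge0 2 (normr_ge0 (`|x| - `|y|)).
  by rewrite real_normK ?rpredB ?normr_real // sqrrB addrAC subr_ge0.
apply: le_trans (leif_Re_Creal _).1 _; rewrite !normrM norm_conjC.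
apply: (@le_trans _ _ (e * (`|x| * `|y|))).
  by rewrite mulrAC mulrC ler_wpM2r ?mulr_ge0 ?normr_ge0.
by rewrite mulrAC ler_pdivlMr ?ltr0n // -mulrA ler_wpM2l // mulr_natr.
Qed.

Lemma form_self_ge0 n (w : 'cV[C]_n) : 0 <= (w^t* *m w) 0 0.
Proof. by rewrite mxE sumr_ge0 // => j _; rewrite !mxE mulrC mul_conjC_ge0. Qed.

Definition dissipative n (W : 'M[C]_n) :=
  forall w : 'cV_n, w != 0 -> 'Re ((w^t* *m W *m w) 0 0) < 0.

Lemma diag_dominant_dissipative n (W : 'M[C]_n) (e dl : C) : 0 <= e ->
  (forall i j, i != j -> `|W i j| <= e) -> (forall i, 'Re (W i i) <= - dl) ->
  e *+ n < dl -> dissipative W.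
Proof.
move=> e_ge0 W_offdiag W_diag e_lt_dl w w_nz; pose a i := `|w i 0|.
have term_le i j : 'Re ((w i 0)^* * W i j * w j 0) <=
    (i == j)%:R * (- dl * a i ^+ 2) + e / 2 * (a i ^+ 2 + a j ^+ 2).
  have [<-|ij] := eqVneq i j; last by rewrite mul0r add0r Re_conjCM_le ?W_offdiag.
  apply: (@le_trans _ _ (- dl * a i ^+ 2)); last first.
    rewrite /= mulr1n mul1r lerDl.
    by rewrite mulr_ge0 ?divr_ge0 ?addr_ge0 ?exprn_ge0 ?normr_ge0 ?ler0n.
  have -> : (w i 0)^* * W i i * w i 0 = a i ^+ 2 * W i i by rewrite normCKC; ring.
  rewrite (ReMl (ger0_real (exprn_ge0 _ (normr_ge0 _)))) mulrC.
  by rewrite ler_wpM2r ?exprn_ge0 ?normr_ge0 ?W_diag.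
pose F i j := (i == j)%:R * (- dl * a i ^+ 2) + e / 2 * (a i ^+ 2 + a j ^+ 2).
have sumE : \sum_j \sum_i F i j = (e *+ n - dl) * \sum_i a i ^+ 2.
  have inner j : \sum_i F i j = - dl * a j ^+ 2 + e / 2 * (\sum_i a i ^+ 2 + a j ^+ 2 *+ n).
    rewrite big_split /= (bigD1 j) //= eqxx mul1r big1 ?addr0 => [|i /negbTE ->].
      by rewrite -mulr_sumr big_split /= sumr_const card_ord.
    by rewrite mul0r.
  under eq_bigr => j _ do rewrite inner.
  rewrite big_split /= -!mulr_sumr big_split /= sumr_const card_ord.
  rewrite (sumrMnl _ _ (fun i => a i ^+ 2)).
  by move: (\sum_(i < n) _) => S; field.
have formE : (w^t* *m W *m w) 0 0 = \sum_j \sum_i (w i 0)^* * W i j * w j 0.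
  rewrite mxE; apply: eq_bigr => j _; rewrite mxE mulr_suml.
  by apply: eq_bigr => i _; rewrite !mxE.
rewrite formE raddf_sum (le_lt_trans (y := (e *+ n - dl) * \sum_i a i ^+ 2)) //.
  rewrite -sumE; apply: ler_sum => j _; rewrite raddf_sum.
  by apply: ler_sum => i _; exact: term_le.
by rewrite nmulr_rlt0 ?subr_lt0 ?sqnorm_gt0.
Qed.

Lemma trig_diag_scaling n (T : 'M[C]_n) r : is_trig_mx T ->
  diag_mx (\row_i r ^+ i) *m T =
  (\matrix_(i, j) (r ^+ (i - j) * T i j)) *m diag_mx (\row_i r ^+ i).
Proof.
move=> /is_trig_mxP T_trig; apply/matrixP => i j; rewrite mul_diag_mx mul_mx_diag !mxE.
have [ji|ij] := leqP j i; last by rewrite T_trig // !(mulr0, mul0r).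
by rewrite mulrAC -exprD subnK.
Qed.

(* With [r = dl / (dl + n K)], [K] bounding the entries of [T], the
   off-diagonal entries of [D T D^-1] are at most [r K] and [n r K < dl]. *)
Lemma trig_similar_dissipative n (T : 'M[C]_n) dl : 0 < dl -> is_trig_mx T ->
  (forall i, 'Re (T i i) <= - dl) ->
  exists2 D, D \in unitmx & dissipative (D *m T *m invmx D).
Proof.
move=> dl_gt0 T_trig T_diag; pose K := \sum_(k : 'I_n * 'I_n) `|T k.1 k.2|.
have K_ge0 : 0 <= K by apply: sumr_ge0 => k _.
have T_le_K i j : `|T i j| <= K.
  exact: (ler_sum_term (F := fun k : 'I_n * 'I_n => `|T k.1 k.2|) (i, j) (fun _ => normr_ge0 _)).
pose r := dl / (dl + K *+ n).
have den_gt0 : 0 < dl + K *+ n by rewrite ltr_wpDr ?mulrn_wge0.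
have r_ge0 : 0 <= r by rewrite divr_ge0 ?ltW.
have r_le1 : r <= 1 by rewrite ler_pdivrMr // mul1r lerDl mulrn_wge0.
have rK_lt_dl : (r * K) *+ n < dl.
  by rewrite -mulrnAr /r mulrAC ltr_pdivrMr // ltr_pM2l // ltrDr.
pose D : 'M[C]_n := diag_mx (\row_i r ^+ i).
have D_unit : D \in unitmx.
  rewrite unitmxE det_diag unitfE; apply/prodf_neq0 => i _.
  by rewrite mxE expf_neq0 // mulf_neq0 ?invr_eq0 ?lt0r_neq0.
exists D => //.
have -> : D *m T *m invmx D = \matrix_(i, j) (r ^+ (i - j) * T i j).
  by rewrite trig_diag_scaling ?mulmxK.
apply: (@diag_dominant_dissipative _ _ (r * K) dl) => // [|i j ij|i].
- exact: mulr_ge0.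
- move/is_trig_mxP: T_trig => T_trig; rewrite mxE normrM ger0_norm ?exprn_ge0 //.
  have [lt_ij|lt_ji|eq_ij] := ltngtP i j; last by rewrite (val_inj eq_ij) eqxx in ij.
    by rewrite T_trig // normr0 mulr0 mulr_ge0.
  by rewrite ler_pM ?exprn_ge0 ?ler_iXnr ?subn_gt0.
- by rewrite mxE subnn expr0 mul1r.
Qed.

End ComplexMatrices.

Section ComplexOfReal.
Variable R : rcfType.
Local Notation C := R[i].
Local Notation toC := (real_complex R).
Local Notation Re := (@complex.Re R).
Local Notation Im := (@complex.Im R).

Lemma toC_real (r : R) : toC r \is Num.real.
Proof. by apply/complex_realP; exists r. Qed.

Lemma map_mx_toC_tC m n (A : 'M[R]_(m, n)) : (map_mx toC A)^t* = (map_mx toC A)^T.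
Proof. by apply/matrixP => i j; rewrite !mxE conj_Creal ?toC_real. Qed.

Lemma sym_lambda_max_lt0_negdef d (Q : 'M[R]_d) :
  Q^T = Q -> lambda_max_lt Q 0 -> negdef Q.
Proof.
move=> Qsym Q_lt0 x x_nz; have [m m_lt0 eig_le_m] := lambda_max_lt0_ub Q_lt0.
pose QC := map_mx toC Q.
have QC_herm : QC \is hermsymmx.
  apply/is_hermitianmxP; rewrite expr0 scale1r.
  by rewrite /QC map_mx_toC_tC map_trmx Qsym.
have QC_normal := hermitian_normalmx QC_herm.
have /orthomx_spectralP QCE := QC_normal.
set U := spectralmx QC in QCE; set s := spectral_diag QC in QCE.
have U_unitary : U \is unitarymx := spectral_unitarymx QC.
have s_le_m i : s 0 i <= toC m.
  have /complex_realP [r sr] := mxOverP (hermitian_spectral_diag_real QC_herm) 0 i.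
  have := spectral_diag_eigenvalue i QC_normal; rewrite -/s sr lecR eigenvalue_map.
  exact: eig_le_m.
pose z := U *m map_mx toC x.
have z_nz : z != 0.
  apply: contra x_nz => /eqP z0; rewrite -(map_mx_eq0 toC).
  by rewrite -(mulKmx (unitarymx_unit U_unitary) (map_mx _ x)) -/z z0 mulmx0.
have formE : toC (bform Q x x) = \sum_j s 0 j * `|z j 0| ^+ 2.
  have -> : toC (bform Q x x) = ((map_mx toC x)^T *m QC *m map_mx toC x) 0 0.
    by rewrite /QC map_trmx -!map_mxM mxE.
  by rewrite QCE (invmx_unitary U_unitary) -form_diag_mx /z trmx_mul map_mxM map_mx_toC_tC !mulmxA.
rewrite -(ltcR _ 0) formE; apply: le_lt_trans (_ : toC m * \sum_j `|z j 0| ^+ 2 < 0).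
  by rewrite mulr_sumr; apply: ler_sum => j _; apply: ler_wpM2r; rewrite ?exprn_ge0.
by rewrite nmulr_rlt0 ?sqnorm_gt0 // ltcR.
Qed.

Lemma map_Re_toC_mulmx m n p (A : 'M[R]_(m, n)) (y : 'M[C]_(n, p)) :
  map_mx Re (map_mx toC A *m y) = A *m map_mx Re y.
Proof.
apply/matrixP => i j; rewrite !mxE raddf_sum; apply: eq_bigr => k _.
by rewrite !mxE; case: (y k j) => u v /=; ring.
Qed.

Lemma map_Im_toC_mulmx m n p (A : 'M[R]_(m, n)) (y : 'M[C]_(n, p)) :
  map_mx Im (map_mx toC A *m y) = A *m map_mx Im y.
Proof.
apply/matrixP => i j; rewrite !mxE raddf_sum; apply: eq_bigr => k _.
by rewrite !mxE; case: (y k j) => u v /=; ring.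
Qed.

Lemma map_Re_mulmx_toC m n p (y : 'M[C]_(m, n)) (A : 'M[R]_(n, p)) :
  map_mx Re (y *m map_mx toC A) = map_mx Re y *m A.
Proof.
apply/matrixP => i j; rewrite !mxE raddf_sum; apply: eq_bigr => k _.
by rewrite !mxE; case: (y i k) => u v /=; ring.
Qed.

Lemma stable_eigenvalue_Re_lt0 d (M : 'M[R]_d) l :
  stable M -> eigenvalue (map_mx toC M) l -> Re l < 0.
Proof.
move=> M_stable /eigenvalue_col [y y_nz My].
apply: (M_stable _ (Im l)); exists (map_mx Re y), (map_mx Im y); split; last split.
- apply/orP; rewrite -negb_and; apply: contra y_nz => /andP [/eqP y_re /eqP y_im].
  apply/eqP/matrixP => i j; have /matrixP/(_ i j) := y_re; have /matrixP/(_ i j) := y_im.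
  by rewrite !mxE; case: (y i j) => u v /= -> ->.
- rewrite -map_Re_toC_mulmx My; apply/matrixP => i j; rewrite !mxE.
  by move: (l) (y i j) => [a b] [u v] /=; ring.
- rewrite -map_Im_toC_mulmx My; apply/matrixP => i j; rewrite !mxE.
  by move: (l) (y i j) => [a b] [u v] /=; ring.
Qed.

Lemma bform_map_Re d (N : 'M[C]_d) x y :
  bform (map_mx Re N) x y = Re (((map_mx toC x)^T *m N *m map_mx toC y) 0 0).
Proof.
rewrite [RHS](_ : _ = (map_mx Re ((map_mx toC x)^T *m (N *m map_mx toC y))) 0 0).
  by rewrite map_trmx map_Re_toC_mulmx map_Re_mulmx_toC /bform mulmxA.
by rewrite [RHS]mxE mulmxA.
Qed.

Lemma dissipative_similar_lyapunov d (M : 'M[R]_d) (V : 'M[C]_d) :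
  V \in unitmx -> dissipative (V *m map_mx toC M *m invmx V) ->
  exists P, psd P /\ negdef (lyapmx M P).
Proof.
move=> V_unit W_diss; pose P := map_mx Re (V^t* *m V).
have P_form x y : toC (bform P x y) =
    'Re (((V *m map_mx toC x)^t* *m (V *m map_mx toC y)) 0 0).
  by rewrite bform_map_Re complexRe trmx_mul map_mxM map_mx_toC_tC !mulmxA.
have P_sym : P^T = P.
  have G_herm : (V^t* *m V)^t* = V^t* *m V by rewrite trmx_mul map_mxM trmxCK.
  rewrite /P map_trmx -{1}G_herm map_trmx trmxK -map_mx_comp.
  by apply: eq_map_mx => z; case: z.
exists P; split; first split => // x.
  by rewrite -(lecR 0) P_form (Creal_ReP _ (ger0_real (form_self_ge0 _))) form_self_ge0.
move=> x x_nz; rewrite bform_lyapmx // pmulr_rlt0 // -(ltcR _ 0) P_form map_mxM.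
set w := V *m map_mx toC x.
have -> : V *m (map_mx toC M *m map_mx toC x) = V *m map_mx toC M *m invmx V *m w.
  by rewrite /w !mulmxA mulmxKV.
rewrite mulmxA; apply: W_diss; apply: contra x_nz => /eqP w0.
by rewrite -(map_mx_eq0 toC) -(mulKmx V_unit (map_mx toC x)) -/w w0 mulmx0.
Qed.

Lemma stable_lyapunov d (M : 'M[R]_d) : stable M -> exists P, psd P /\ negdef (lyapmx M P).
Proof.
case: d M => [|d] M M_stable.
  exists 0; split; last by move=> x; rewrite (flatmx0 x) eqxx.
  by split=> [|x]; rewrite ?trmx0 // mulmx0 mul0mx mxE.
have [U U_unitary T_trig] := Schur (map_mx toC M) (ltn0Sn d).
have U_unit := unitarymx_unit U_unitary.
set T := conjmx U (map_mx toC M) in T_trig.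
have T_Re i : Re (T i i) < 0.
  apply: (stable_eigenvalue_Re_lt0 M_stable).
  have U_stable : stablemx U (map_mx toC M) by rewrite submx_full ?row_full_unit.
  have U_free : row_free U by rewrite row_free_unit.
  exact: (eigenvalue_conjmx U_stable U_free (eigenvalue_trig i T_trig)).
have [|m m_lt0 T_le_m] := @lt0_seq_ub R [seq Re (T i i) | i <- enum 'I_d.+1].
  by move=> _ /mapP [i _ ->].
have dl_gt0 : 0 < toC (- m) by rewrite ltcR oppr_gt0.
have T_diag i : 'Re (T i i) <= - toC (- m).
  rewrite -complexRe -rmorphN opprK lecR; apply: T_le_m.
  by apply/mapP; exists i; rewrite ?mem_enum.
have [D D_unit T_diss] := trig_similar_dissipative dl_gt0 T_trig T_diag.
have DU_unit : D *m U \in unitmx by rewrite unitmx_mul D_unit U_unit.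
apply: (dissipative_similar_lyapunov DU_unit).
suff -> : D *m U *m map_mx toC M *m invmx (D *m U) = D *m T *m invmx D by [].
apply: (canLR (mulmxK DU_unit)).
by rewrite /T conjumx // !mulmxA !mulmxKV.
Qed.

Lemma psd_lambda_max_lt0_stable d (M P : 'M[R]_d) :
  psd P -> lambda_max_lt (lyapmx M P) 0 -> stable M.
Proof.
move=> Ppsd Q_lt0; apply: (negdef_lyapmx_stable Ppsd).
by apply: sym_lambda_max_lt0_negdef Q_lt0; rewrite lyapmx_sym //; case: Ppsd.
Qed.

Lemma stable_lambda_max_unbounded d (M : 'M[R]_d) : stable M ->
  forall c, exists P, psd P /\ lambda_max_lt (lyapmx M P) c.
Proof.
by move=> /stable_lyapunov [P [Ppsd Qneg]]; apply: negdef_lyapmx_lambda_max_unbounded Ppsd Qneg.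
Qed.

Lemma not_stable_lambda_max_ge0 d (M P : 'M[R]_d) :
  ~ stable M -> psd P -> lambda_max_ge (lyapmx M P) 0.
Proof.
move=> M_unstable Ppsd; apply: NNPP => no_eig_ge0.
apply/M_unstable/(psd_lambda_max_lt0_stable Ppsd).
by move=> a Qa; rewrite ltNge; apply/negP => a_ge0; apply: no_eig_ge0; exists a.
Qed.

End ComplexOfReal.

Theorem theorem1 (R : rcfType) (N : nat) (nb mb : 'I_N -> nat)
  (Ab : forall i j, 'M[R]_(nb i, nb j))
  (Bb : forall i j, 'M[R]_(nb i, mb j))
  (Kb : forall i j, 'M[R]_(mb i, nb j))
  (HN : (0 < N)%N) (Hn : forall i, (0 < nb i)%N)
  (HBdiag : forall i j, i != j -> Bb i j = 0) :
  (resilient Ab Bb Kb <-> gammaL0_neg_infty Ab Bb Kb) /\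
  (~ resilient Ab Bb Kb <-> gammaL0_nonneg Ab Bb Kb).
Proof.
split; split.
- by move=> resil alpha alpha_pure; apply: stable_lambda_max_unbounded; apply: resil.
- move=> gamma_infty alpha alpha_pure; have [P [Ppsd Q_lt0]] := gamma_infty alpha alpha_pure 0.
  exact: psd_lambda_max_lt0_stable Ppsd Q_lt0.
- move=> not_resil; have [alpha not_stable_alpha] := not_all_ex_not _ _ not_resil.
  have [alpha_pure A_unstable] := imply_to_and _ _ not_stable_alpha.
  by exists alpha; split=> [//|P Ppsd]; apply: not_stable_lambda_max_ge0.
- move=> [alpha [alpha_pure gamma_ge0]] resil.
  have [P [Ppsd Q_lt0]] := stable_lambda_max_unbounded (resil alpha alpha_pure) 0.
  have [a Qa a_ge0] := gamma_ge0 P Ppsd.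
  by have := Q_lt0 a Qa; rewrite ltNge a_ge0.
Qed.
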